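(* Let $p,\mu_b,\mu_\nu,\theta\in(0,1)$ and let $N_0\ge 2$ and $N_1\ge N_0+2$ be integers. Consider the discrete-time Markov chain on the finite state space $\Omega_{ob}=\{(n,0):0\le n\le N_0+1\}\cup\{(n,1):1\le n\le N_1+1\}$ whose one-step transition probabilities are listed in the context (all unlisted transitions have probability $0$). Let $\alpha=\frac{p\bar\mu_b}{\bar p\mu_b}$, and let $x_1^*,x_2^*,\Delta$ be as defined in the context. Assume $\alpha<1$, $\Delta\neq 0$ and $\alpha\notin\{x_1^*,x_2^*\}$. Then the chain has a unique stationary distribution $\pi=(\pi^+_{nj})_{(n,j)\in\Omega_{ob}}$ (i.e. $\pi\ge0$, $\sum\pi^+_{nj}=1$, $\pi P=\pi$), and, writing $c=\pi^+_{11}$ (which is the constant making the total mass equal to $1$) and defining, with $H=1/\Delta$, $$\tilde A_1=-H\bar p\bar\theta\mu_b\,c\,b(x_2^* ),\qquad \tilde B_1=H\bar p\bar\theta\mu_b\,c\,b(x_1^* ),$$ $$\tilde C_1=\frac{\theta\tilde A_1[(x_1^*-1)(\bar p\mu_\nu x_1^*-p\bar\mu_\nu)+x_1^*]}{(x_1^*-1)(p\bar\mu_b-\bar p\mu_b x_1^* )},\qquad \tilde D_1=\frac{\theta\tilde B_1[(x_2^*-1)(\bar p\mu_\nu x_2^*-p\bar\mu_\nu)+x_2^*]}{(1-x_2^* )(\bar p\mu_b x_2^*-p\bar\mu_b)},$$ $$\tilde A_2=\frac{\bar p\mu_b\bar\theta c-\bar p\mu_b(\tilde C_1x_1^{*2}+\tilde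 D_1x_2^{*2}-\alpha\tilde C_1x_1^*-\alpha\tilde D_1x_2^* )-\theta\bar p\mu_\nu(\tilde A_1x_1^{*2}+\tilde B_1x_2^{*2})-\theta(1-p\bar\mu_\nu)(\tilde A_1x_1^*+\tilde B_1x_2^* )}{\bar p\mu_b(1-\alpha)},$$ $$\tilde B_2=\frac{\bar p\mu_b(\tilde C_1x_1^{*2}+\tilde D_1x_2^{*2}-\tilde C_1x_1^*-\tilde D_1x_2^* )+\theta\bar p\mu_\nu(\tilde A_1x_1^{*2}+\tilde B_1x_2^{*2})+\theta(1-p\bar\mu_\nu)(\tilde A_1x_1^*+\tilde B_1x_2^* )-(p\bar\mu_b-\bar p\mu_b\theta)c}{\bar p\mu_b\alpha(1-\alpha)},$$ the stationary probabilities are \begin{align*} \pi^+_{00}&=\tfrac{\bar p\mu_\nu}{p}(\tilde A_1x_1^*+\tilde B_1x_2^* )+\tfrac{\bar p\mu_b}{p}c,\\ \pi^+_{n0}&=\tilde A_1x_1^{*n}+\tilde B_1x_2^{*n},\quad 1\le n\le N_0,\\ \pi^+_{N_0+1,0}&=\tfrac{p\bar\theta\bar\mu_\nu}{1-\bar\theta\bar\mu_\nu}(\tilde A_1x_1^{*N_0}+\tilde B_1x_2^{*N_0}),\\ \pi^+_{n1}&=\tilde A_2+\tilde B_2\alpha^n+\tilde C_1x_1^{*n}+\tilde D_1x_2^{*n},\quad 1\le n\le N_0,\\ \pi^+_{N_0+1,1}&=\alpha(\tilde A_2+\tilde B_2\alpha^{N_0}+\tilde C_1x_1^{*N_0}+\tilde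 D_1x_2^{*N_0})+\tfrac{p\theta\bar\mu_\nu}{\bar p\mu_b(1-\bar\theta\bar\mu_\nu)}(\tilde A_1x_1^{*N_0}+\tilde B_1x_2^{*N_0}),\\ \pi^+_{n1}&=\alpha^{\,n-N_0-1}\pi^+_{N_0+1,1},\quad N_0+2\le n\le N_1,\\ \pi^+_{N_1+1,1}&=\bar p\,\alpha^{N_1-N_0}\pi^+_{N_0+1,1}. \end{align*}
   Context: For $x\in[0,1]$ write $\bar x=1-x$. Set $s_\nu=1-p\bar\mu_\nu-\bar p\mu_\nu$ and $s_b=1-p\bar\mu_b-\bar p\mu_b$. The transition probabilities of the chain (observable Geo/Geo/1 queue with multiple working vacations under threshold policy $(N_0,N_1)$; state $(n,j)$ = number in system $n$, server in working vacation $j=0$ or regular busy period $j=1$) are: From $(0,0)$: to $(0,0)$ w.p. $\bar p$; to $(1,0)$ w.p. $p\bar\theta$; to $(1,1)$ w.p. $p\theta$. From $(1,0)$: to $(0,0)$ w.p. $\bar p\mu_\nu$; to $(1,0)$ w.p. $\bar\theta s_\nu$; to $(1,1)$ w.p. $\theta s_\nu$; to $(2,0)$ w.p. $p\bar\theta\bar\mu_\nu$; to $(2,1)$ w.p. $p\theta\bar\mu_\nu$. From $(n,0)$, $2\le n\le N_0$: to $(n-1,0)$ w.p. $\bar p\bar\theta\mu_\nu$; to $(n-1,1)$ w.p. $\bar p\theta\mu_\nu$; to $(n,0)$ w.p. $\bar\theta s_\nu$; to $(n,1)$ w.p. $\theta s_\nu$; to $(n+1,0)$ w.p. $p\bar\theta\bar\mu_\nu$;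 to $(n+1,1)$ w.p. $p\theta\bar\mu_\nu$. From $(N_0+1,0)$: to $(N_0,0)$ w.p. $\bar\theta\mu_\nu$; to $(N_0,1)$ w.p. $\theta\mu_\nu$; to $(N_0+1,0)$ w.p. $\bar\theta\bar\mu_\nu$; to $(N_0+1,1)$ w.p. $\theta\bar\mu_\nu$. From $(1,1)$: to $(0,0)$ w.p. $\bar p\mu_b$; to $(1,1)$ w.p. $s_b$; to $(2,1)$ w.p. $p\bar\mu_b$. From $(n,1)$, $2\le n\le N_1$: to $(n-1,1)$ w.p. $\bar p\mu_b$; to $(n,1)$ w.p. $s_b$; to $(n+1,1)$ w.p. $p\bar\mu_b$. From $(N_1+1,1)$: to $(N_1,1)$ w.p. $\mu_b$; to $(N_1+1,1)$ w.p. $\bar\mu_b$. Constants: $\gamma=\theta+\bar\theta p\bar\mu_\nu+\bar\theta\bar p\mu_\nu$; $x^*_{1,2}=\dfrac{\gamma\pm\sqrt{\gamma^2-4\bar\theta^2p\bar p\mu_\nu\bar\mu_\nu}}{2\bar\theta\bar p\mu_\nu}$ (the two roots of $\bar\theta\bar p\mu_\nu x^2-\gamma x+\bar\theta p\bar\mu_\nu=0$, with $+$ for $x_1^*$); $\kappa=\theta+\bar\theta p\bar\mu_\nu+\bar\theta\bar p\mu_\nu-\theta\bar\theta\bar\mu_\nu-\bar\theta^2\bar\mu_\nu^2p-\bar\theta^2\bar\mu_\nu\mu_\nu$; $a(x)=\theta x+\bar\theta p\bar\mu_\nu x-\bar\theta\bar p\mu_\nu x^2$; $b(x)=\kappa x^{N_0}-p\bar\theta\bar\mu_\nu(1-\bar\theta\bar\mu_\nu)x^{N_0-1}$;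 $\Delta=a(x_2^* )\,b(x_1^* )-a(x_1^* )\,b(x_2^* )$. *)

From Stdlib Require Import Reals Lra Lia Arith List.
Open Scope R_scope.

Definition bar (x : R) : R := 1 - x.

Definition s_nu (p muv : R) : R := 1 - p * bar muv - bar p * muv.
Definition s_b (p mub : R) : R := 1 - p * bar mub - bar p * mub.

Definition trans (p mub muv th : R) (N0 N1 : nat) (n j n' j' : nat) : R :=
  let sv := s_nu p muv in
  let sb := s_b p mub in
  let is a b := ((n' =? a)%nat && (j' =? b)%nat)%bool in
  if (j =? 0)%nat then
    if (n =? 0)%nat then
      if is 0%nat 0%nat then bar p
      else if is 1%nat 0%nat then p * bar th
      else if is 1%nat 1%nat then p * th
      else 0
    else if (n =? 1)%nat then
      if is 0%nat 0%nat then bar p * muv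
      else if is 1%nat 0%nat then bar th * sv
      else if is 1%nat 1%nat then th * sv
      else if is 2%nat 0%nat then p * bar th * bar muv
      else if is 2%nat 1%nat then p * th * bar muv
      else 0
    else if (n <=? N0)%nat then
      if is (n - 1)%nat 0%nat then bar p * bar th * muv
      else if is (n - 1)%nat 1%nat then bar p * th * muv
      else if is n 0%nat then bar th * sv
      else if is n 1%nat then th * sv
      else if is (n + 1)%nat 0%nat then p * bar th * bar muv
      else if is (n + 1)%nat 1%nat then p * th * bar muv
      else 0
    else if (n =? N0 + 1)%nat then
      if is N0 0%nat then bar th * muv
      else if is N0 1%nat then th * muv
      else if is (N0 + 1)%nat 0%nat then bar th * bar muv
      else if is (N0 + 1)%nat 1%nat then th * bar muv
      else 0
    else 0
  else if (j =? 1)%nat then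
    if (n =? 1)%nat then
      if is 0%nat 0%nat then bar p * mub
      else if is 1%nat 1%nat then sb
      else if is 2%nat 1%nat then p * bar mub
      else 0
    else if ((2 <=? n)%nat && (n <=? N1)%nat)%bool then
      if is (n - 1)%nat 1%nat then bar p * mub
      else if is n 1%nat then sb
      else if is (n + 1)%nat 1%nat then p * bar mub
      else 0
    else if (n =? N1 + 1)%nat then
      if is N1 1%nat then mub
      else if is (N1 + 1)%nat 1%nat then bar mub
      else 0
    else 0
  else 0.

Definition inOmega (N0 N1 : nat) (n j : nat) : Prop :=
  (j = 0%nat /\ (n <= N0 + 1)%nat) \/ (j = 1%nat /\ (1 <= n)%nat /\ (n <= N1 + 1)%nat).

Definition omega (N0 N1 : nat) : list (nat * nat) :=
  map (fun n => (n, 0%nat)) (seq 0 (N0 + 2)) ++ map (fun n => (n, 1%nat)) (seq 1 (N1 + 1)).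

Definition sum_omega (N0 N1 : nat) (f : nat -> nat -> R) : R :=
  fold_right Rplus 0 (map (fun s => f (fst s) (snd s)) (omega N0 N1)).

Definition stationary (p mub muv th : R) (N0 N1 : nat) (pi : nat -> nat -> R) : Prop :=
  (forall n j, inOmega N0 N1 n j -> 0 <= pi n j) /\
  sum_omega N0 N1 pi = 1 /\
  (forall n' j', inOmega N0 N1 n' j' ->
     sum_omega N0 N1 (fun n j => pi n j * trans p mub muv th N0 N1 n j n' j') = pi n' j').

Definition alpha (p mub : R) : R := p * bar mub / (bar p * mub).
Definition gam (p muv th : R) : R := th + bar th * p * bar muv + bar th * bar p * muv.
Definition disc (p muv th : R) : R :=
  gam p muv th ^ 2 - 4 * bar th ^ 2 * p * bar p * muv * bar muv.
Definition x1star (p muv th : R) : R :=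
  (gam p muv th + sqrt (disc p muv th)) / (2 * bar th * bar p * muv).
Definition x2star (p muv th : R) : R :=
  (gam p muv th - sqrt (disc p muv th)) / (2 * bar th * bar p * muv).
Definition kappa (p muv th : R) : R :=
  th + bar th * p * bar muv + bar th * bar p * muv - th * bar th * bar muv
  - bar th ^ 2 * bar muv ^ 2 * p - bar th ^ 2 * bar muv * muv.
Definition afun (p muv th x : R) : R :=
  th * x + bar th * p * bar muv * x - bar th * bar p * muv * x ^ 2.
Definition bfun (p muv th : R) (N0 : nat) (x : R) : R :=
  kappa p muv th * x ^ N0 - p * bar th * bar muv * (1 - bar th * bar muv) * x ^ (N0 - 1).
Definition DeltaQ (p muv th : R) (N0 : nat) : R :=
  afun p muv th (x2star p muv th) * bfun p muv th N0 (x1star p muv th)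
  - afun p muv th (x1star p muv th) * bfun p muv th N0 (x2star p muv th).

Section Coeffs.
Variables (p mub muv th : R) (N0 : nat) (c : R).
Let x1 := x1star p muv th.
Let x2 := x2star p muv th.
Let al := alpha p mub.
Let H := 1 / DeltaQ p muv th N0.

Definition tA1 : R := - H * bar p * bar th * mub * c * bfun p muv th N0 x2.
Definition tB1 : R := H * bar p * bar th * mub * c * bfun p muv th N0 x1.
Definition tC1 : R :=
  th * tA1 * ((x1 - 1) * (bar p * muv * x1 - p * bar muv) + x1)
  / ((x1 - 1) * (p * bar mub - bar p * mub * x1)).
Definition tD1 : R :=
  th * tB1 * ((x2 - 1) * (bar p * muv * x2 - p * bar muv) + x2)
  / ((1 - x2) * (bar p * mub * x2 - p * bar mub)).
Definition tA2 : R :=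
  (bar p * mub * bar th * c
   - bar p * mub * (tC1 * x1 ^ 2 + tD1 * x2 ^ 2 - al * tC1 * x1 - al * tD1 * x2)
   - th * bar p * muv * (tA1 * x1 ^ 2 + tB1 * x2 ^ 2)
   - th * (1 - p * bar muv) * (tA1 * x1 + tB1 * x2))
  / (bar p * mub * (1 - al)).
Definition tB2 : R :=
  (bar p * mub * (tC1 * x1 ^ 2 + tD1 * x2 ^ 2 - tC1 * x1 - tD1 * x2)
   + th * bar p * muv * (tA1 * x1 ^ 2 + tB1 * x2 ^ 2)
   + th * (1 - p * bar muv) * (tA1 * x1 + tB1 * x2)
   - (p * bar mub - bar p * mub * th) * c)
  / (bar p * mub * al * (1 - al)).

Definition piN0p1_1 : R :=
  al * (tA2 + tB2 * al ^ N0 + tC1 * x1 ^ N0 + tD1 * x2 ^ N0)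
  + p * th * bar muv / (bar p * mub * (1 - bar th * bar muv))
    * (tA1 * x1 ^ N0 + tB1 * x2 ^ N0).

Definition closed_form (N1 : nat) (n j : nat) : R :=
  if (j =? 0)%nat then
    if (n =? 0)%nat then
      bar p * muv / p * (tA1 * x1 + tB1 * x2) + bar p * mub / p * c
    else if (n <=? N0)%nat then tA1 * x1 ^ n + tB1 * x2 ^ n
    else if (n =? N0 + 1)%nat then
      p * bar th * bar muv / (1 - bar th * bar muv) * (tA1 * x1 ^ N0 + tB1 * x2 ^ N0)
    else 0
  else if (j =? 1)%nat then
    if ((1 <=? n)%nat && (n <=? N0)%nat)%bool then
      tA2 + tB2 * al ^ n + tC1 * x1 ^ n + tD1 * x2 ^ n
    else if (n =? N0 + 1)%nat then piN0p1_1
    else if ((N0 + 2 <=? n)%nat && (n <=? N1)%nat)%bool then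
      al ^ (n - N0 - 1) * piN0p1_1
    else if (n =? N1 + 1)%nat then bar p * al ^ (N1 - N0) * piN0p1_1
    else 0
  else 0.
End Coeffs.

(* The balance equations pi P = pi are a linear system with a one-dimensional
   solution space.  Reading the level-0 equations downward from the top state
   (N0+1,0) shows that the net upward flow across every cut of level 0 is
   nonnegative as soon as pi(N0+1,0) >= 0; reading the level-1 equations
   downward from (N1+1,1) then shows that the net downward flow across every
   cut of level 1 is nonnegative, since level 0 only feeds mass into level 1.
   Hence every solution with pi(N0+1,0) >= 0 is nonnegative, and a solution
   vanishing at (N0+1,0) vanishes identically.  The closed form, which is
   linear in c = pi(1,1), solves the system for every c: on level 0 because
   x1*, x2* are the roots of the characteristic polynomial of the level-0
   recursion and A1, B1 are fitted (through Delta) to the two boundary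
   equations at (1,0) and (N0,0); on level 1 by direct substitution.
   Normalizing it gives the unique stationary distribution. *)

From Pilot Require Import Defs.
From Stdlib Require Import Reals Lra Lia List.
Import ListNotations.
Open Scope R_scope.

Definition sum_range (a L : nat) (g : nat -> R) : R := fold_right Rplus 0 (map g (seq a L)).

Lemma sum_range_S a L g : sum_range a (S L) g = g a + sum_range (S a) L g.
Proof. reflexivity. Qed.

Lemma sum_range_ext a L g h : (forall n, (a <= n < a + L)%nat -> g n = h n) ->
  sum_range a L g = sum_range a L h.
Proof.
  revert a; induction L as [|L IH]; intros a H; [reflexivity|].
  rewrite !sum_range_S. f_equal; [apply H; lia|]. apply IH; intros; apply H; lia.
Qed.

Lemma sum_range_add a L g h :
  sum_range a L (fun n => g n + h n) = sum_range a L g + sum_range a L h.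
Proof.
  revert a; induction L as [|L IH]; intros a; [unfold sum_range; simpl; ring|].
  rewrite !sum_range_S, IH. ring.
Qed.

Lemma sum_range_scal a L k g : sum_range a L (fun n => k * g n) = k * sum_range a L g.
Proof.
  revert a; induction L as [|L IH]; intros a; [unfold sum_range; simpl; ring|].
  rewrite !sum_range_S, IH. ring.
Qed.

Lemma sum_range_0 a L : sum_range a L (fun _ => 0) = 0.
Proof.
  revert a; induction L as [|L IH]; intros a; [reflexivity|].
  rewrite sum_range_S, IH; ring.
Qed.

Lemma sum_range_nonneg a L g : (forall n, (a <= n < a + L)%nat -> 0 <= g n) ->
  0 <= sum_range a L g.
Proof.
  revert a; induction L as [|L IH]; intros a H; [unfold sum_range; simpl; lra|].
  rewrite sum_range_S.
  assert (0 <= g a) by (apply H; lia).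
  assert (0 <= sum_range (S a) L g) by (apply IH; intros; apply H; lia).
  lra.
Qed.

Definition point_mass (k : nat) (c : R) (n : nat) : R := if (n =? k)%nat then c else 0.

Definition point_masses (l : list (nat * R)) (n : nat) : R :=
  fold_right (fun kc acc => point_mass (fst kc) (snd kc) n + acc) 0 l.

Definition total_mass (l : list (nat * R)) : R := fold_right (fun kc acc => snd kc + acc) 0 l.

Lemma sum_range_point_mass_out a L k c : (k < a \/ a + L <= k)%nat ->
  sum_range a L (point_mass k c) = 0.
Proof.
  intros H. rewrite <- (sum_range_0 a L). apply sum_range_ext. intros n Hn.
  unfold point_mass. destruct (Nat.eqb_spec n k); [lia|reflexivity].
Qed.

Lemma sum_range_point_mass a L k c : (a <= k < a + L)%nat ->
  sum_range a L (point_mass k c) = c.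
Proof.
  revert a; induction L as [|L IH]; intros a H; [lia|].
  rewrite sum_range_S. unfold point_mass at 1. destruct (Nat.eqb_spec a k).
  - rewrite sum_range_point_mass_out by lia. ring.
  - rewrite IH by lia. ring.
Qed.

Lemma sum_range_point_masses a L l : Forall (fun kc => (a <= fst kc < a + L)%nat) l ->
  sum_range a L (point_masses l) = total_mass l.
Proof.
  induction l as [|kc l IH]; intros H.
  - apply sum_range_0.
  - inversion H; subst. unfold point_masses; simpl.
    rewrite sum_range_add, sum_range_point_mass by auto.
    fold (point_masses l). rewrite IH by auto. reflexivity.
Qed.

Lemma fold_right_Rplus_init l z : fold_right Rplus z l = fold_right Rplus 0 l + z.
Proof. induction l as [|a l IH]; simpl; [ring|rewrite IH; ring]. Qed.

Lemma sum_omega_split N0 N1 f : sum_omega N0 N1 f =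
  sum_range 0 (N0 + 2) (fun n => f n 0%nat) + sum_range 1 (N1 + 1) (fun n => f n 1%nat).
Proof.
  unfold sum_omega, omega, sum_range.
  rewrite map_app, fold_right_app, fold_right_Rplus_init, !map_map. reflexivity.
Qed.

Lemma sum_omega_point_masses N0 N1 (F : nat -> nat -> R) l0 l1 :
  (forall n, (n < N0 + 2)%nat -> F n 0%nat = point_masses l0 n) ->
  (forall n, (1 <= n < N1 + 2)%nat -> F n 1%nat = point_masses l1 n) ->
  Forall (fun kc => (0 <= fst kc < 0 + (N0 + 2))%nat) l0 ->
  Forall (fun kc => (1 <= fst kc < 1 + (N1 + 1))%nat) l1 ->
  sum_omega N0 N1 F = total_mass l0 + total_mass l1.
Proof.
  intros H0 H1 F0 F1. rewrite sum_omega_split.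
  rewrite (sum_range_ext 0 (N0 + 2) _ (point_masses l0)) by (intros; apply H0; lia).
  rewrite (sum_range_ext 1 (N1 + 1) _ (point_masses l1)) by (intros; apply H1; lia).
  rewrite !sum_range_point_masses by auto. reflexivity.
Qed.

Lemma sum_omega_ext N0 N1 f g : (forall n j, inOmega N0 N1 n j -> f n j = g n j) ->
  sum_omega N0 N1 f = sum_omega N0 N1 g.
Proof.
  intros H. rewrite !sum_omega_split.
  rewrite (sum_range_ext 0 (N0 + 2) (fun n => f n 0%nat) (fun n => g n 0%nat))
    by (intros; apply H; left; lia).
  rewrite (sum_range_ext 1 (N1 + 1) (fun n => f n 1%nat) (fun n => g n 1%nat))
    by (intros; apply H; right; lia).
  reflexivity.
Qed.

Lemma sum_omega_scal N0 N1 k f :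
  sum_omega N0 N1 (fun n j => k * f n j) = k * sum_omega N0 N1 f.
Proof. rewrite !sum_omega_split, !sum_range_scal. ring. Qed.

Lemma sum_omega_ge_11 N0 N1 f : (forall n j, inOmega N0 N1 n j -> 0 <= f n j) ->
  f 1%nat 1%nat <= sum_omega N0 N1 f.
Proof.
  intros H. rewrite sum_omega_split.
  assert (0 <= sum_range 0 (N0 + 2) (fun n => f n 0%nat))
    by (apply sum_range_nonneg; intros; apply H; left; lia).
  replace (N1 + 1)%nat with (S N1) by lia. rewrite sum_range_S.
  assert (0 <= sum_range 2 N1 (fun n => f n 1%nat))
    by (apply sum_range_nonneg; intros; apply H; right; lia).
  lra.
Qed.

(** * The balance equations *)

Ltac decide_nat_tests :=
  repeat (match goal with
   | |- context [Nat.eqb ?a ?b] => destruct (Nat.eqb_spec a b)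
   | |- context [Nat.leb ?a ?b] => destruct (Nat.leb_spec a b)
   end; cbn [andb orb] in *; try (exfalso; lia)).

Ltac align_indices x :=
  repeat match goal with |- context [x ?a ?j] => match goal with |- context [x ?b j] =>
     assert_fails (constr_eq a b); replace b with a by lia end end.

(* Each column of the transition matrix has at most six nonzero entries: the
   column sum is computed by exhibiting the summand as a list of point masses. *)
Ltac inflow_column x :=
  intros ? ?; unfold point_masses; cbn [fold_right fst snd]; unfold point_mass, trans;
  cbv zeta; decide_nat_tests; align_indices x; ring.

Ltac inflow_by l0 l1 x :=
  rewrite (sum_omega_point_masses _ _ _ l0 l1);
  [ unfold total_mass; cbn [fold_right fst snd]; ring
  | inflow_column x | inflow_column x
  | repeat constructor; cbn [fst]; lia | repeat constructor; cbn [fst]; lia ].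

Section Balance.
Variables (p mub muv th : R) (N0 N1 : nat).
Hypothesis (hN0 : (2 <= N0)%nat) (hN1 : (N0 + 2 <= N1)%nat).
Hypothesis (hp : 0 < p < 1) (hmub : 0 < mub < 1) (hmuv : 0 < muv < 1) (hth : 0 < th < 1).
Local Notation sv := (s_nu p muv).
Local Notation sb := (s_b p mub).
Local Notation inflow x a b :=
  (sum_omega N0 N1 (fun n j => x n j * trans p mub muv th N0 N1 n j a b)).

Record balance (x : nat -> nat -> R) : Prop := {
  bal_00 : x 0%nat 0%nat = bar p * x 0%nat 0%nat + bar p * muv * x 1%nat 0%nat
     + bar p * mub * x 1%nat 1%nat;
  bal_10 : x 1%nat 0%nat = p * bar th * x 0%nat 0%nat + bar th * sv * x 1%nat 0%nat
     + bar p * bar th * muv * x 2%nat 0%nat;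
  bal_n0 : forall m, (2 <= m <= N0 - 1)%nat -> x m 0%nat =
     p * bar th * bar muv * x (m - 1)%nat 0%nat + bar th * sv * x m 0%nat
     + bar p * bar th * muv * x (m + 1)%nat 0%nat;
  bal_N0_0 : x N0 0%nat = p * bar th * bar muv * x (N0 - 1)%nat 0%nat
     + bar th * sv * x N0 0%nat + bar th * muv * x (N0 + 1)%nat 0%nat;
  bal_N0S_0 : x (N0 + 1)%nat 0%nat = p * bar th * bar muv * x N0 0%nat
     + bar th * bar muv * x (N0 + 1)%nat 0%nat;
  bal_11 : x 1%nat 1%nat = p * th * x 0%nat 0%nat + th * sv * x 1%nat 0%nat
     + bar p * th * muv * x 2%nat 0%nat + sb * x 1%nat 1%nat + bar p * mub * x 2%nat 1%nat;
  bal_n1 : forall m, (2 <= m <= N0 - 1)%nat -> x m 1%nat =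
     p * th * bar muv * x (m - 1)%nat 0%nat + th * sv * x m 0%nat
     + bar p * th * muv * x (m + 1)%nat 0%nat
     + p * bar mub * x (m - 1)%nat 1%nat + sb * x m 1%nat + bar p * mub * x (m + 1)%nat 1%nat;
  bal_N0_1 : x N0 1%nat =
     p * th * bar muv * x (N0 - 1)%nat 0%nat + th * sv * x N0 0%nat
     + th * muv * x (N0 + 1)%nat 0%nat
     + p * bar mub * x (N0 - 1)%nat 1%nat + sb * x N0 1%nat + bar p * mub * x (N0 + 1)%nat 1%nat;
  bal_N0S_1 : x (N0 + 1)%nat 1%nat =
     p * th * bar muv * x N0 0%nat + th * bar muv * x (N0 + 1)%nat 0%nat
     + p * bar mub * x N0 1%nat + sb * x (N0 + 1)%nat 1%nat + bar p * mub * x (N0 + 2)%nat 1%nat;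
  bal_m1 : forall m, (N0 + 2 <= m <= N1 - 1)%nat -> x m 1%nat =
     p * bar mub * x (m - 1)%nat 1%nat + sb * x m 1%nat + bar p * mub * x (m + 1)%nat 1%nat;
  bal_N1_1 : x N1 1%nat = p * bar mub * x (N1 - 1)%nat 1%nat + sb * x N1 1%nat
     + mub * x (N1 + 1)%nat 1%nat;
  bal_N1S_1 : x (N1 + 1)%nat 1%nat = p * bar mub * x N1 1%nat + bar mub * x (N1 + 1)%nat 1%nat
}.

Lemma inflow_00 x : inflow x 0%nat 0%nat =
  bar p * x 0%nat 0%nat + bar p * muv * x 1%nat 0%nat + bar p * mub * x 1%nat 1%nat.
Proof.
  inflow_by [(0%nat, bar p * x 0%nat 0%nat); (1%nat, bar p * muv * x 1%nat 0%nat)]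
    [(1%nat, bar p * mub * x 1%nat 1%nat)] x.
Qed.

Lemma inflow_10 x : inflow x 1%nat 0%nat =
  p * bar th * x 0%nat 0%nat + bar th * sv * x 1%nat 0%nat + bar p * bar th * muv * x 2%nat 0%nat.
Proof.
  inflow_by [(0%nat, p * bar th * x 0%nat 0%nat); (1%nat, bar th * sv * x 1%nat 0%nat);
    (2%nat, bar p * bar th * muv * x 2%nat 0%nat)] (@nil (nat * R)) x.
Qed.

Lemma inflow_n0 x m : (2 <= m <= N0 - 1)%nat -> inflow x m 0%nat =
  p * bar th * bar muv * x (m - 1)%nat 0%nat + bar th * sv * x m 0%nat
  + bar p * bar th * muv * x (m + 1)%nat 0%nat.
Proof.
  intros Hm.
  inflow_by [((m - 1)%nat, p * bar th * bar muv * x (m - 1)%nat 0%nat);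
    (m, bar th * sv * x m 0%nat); ((m + 1)%nat, bar p * bar th * muv * x (m + 1)%nat 0%nat)]
    (@nil (nat * R)) x.
Qed.

Lemma inflow_N0_0 x : inflow x N0 0%nat =
  p * bar th * bar muv * x (N0 - 1)%nat 0%nat + bar th * sv * x N0 0%nat
  + bar th * muv * x (N0 + 1)%nat 0%nat.
Proof.
  inflow_by [((N0 - 1)%nat, p * bar th * bar muv * x (N0 - 1)%nat 0%nat);
    (N0, bar th * sv * x N0 0%nat); ((N0 + 1)%nat, bar th * muv * x (N0 + 1)%nat 0%nat)]
    (@nil (nat * R)) x.
Qed.

Lemma inflow_N0S_0 x : inflow x (N0 + 1)%nat 0%nat =
  p * bar th * bar muv * x N0 0%nat + bar th * bar muv * x (N0 + 1)%nat 0%nat.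
Proof.
  inflow_by [(N0, p * bar th * bar muv * x N0 0%nat);
    ((N0 + 1)%nat, bar th * bar muv * x (N0 + 1)%nat 0%nat)] (@nil (nat * R)) x.
Qed.

Lemma inflow_11 x : inflow x 1%nat 1%nat =
  p * th * x 0%nat 0%nat + th * sv * x 1%nat 0%nat + bar p * th * muv * x 2%nat 0%nat
  + sb * x 1%nat 1%nat + bar p * mub * x 2%nat 1%nat.
Proof.
  inflow_by [(0%nat, p * th * x 0%nat 0%nat); (1%nat, th * sv * x 1%nat 0%nat);
    (2%nat, bar p * th * muv * x 2%nat 0%nat)]
    [(1%nat, sb * x 1%nat 1%nat); (2%nat, bar p * mub * x 2%nat 1%nat)] x.
Qed.

Lemma inflow_n1 x m : (2 <= m <= N0 - 1)%nat -> inflow x m 1%nat =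
  p * th * bar muv * x (m - 1)%nat 0%nat + th * sv * x m 0%nat
  + bar p * th * muv * x (m + 1)%nat 0%nat
  + p * bar mub * x (m - 1)%nat 1%nat + sb * x m 1%nat + bar p * mub * x (m + 1)%nat 1%nat.
Proof.
  intros Hm.
  inflow_by [((m - 1)%nat, p * th * bar muv * x (m - 1)%nat 0%nat);
    (m, th * sv * x m 0%nat); ((m + 1)%nat, bar p * th * muv * x (m + 1)%nat 0%nat)]
    [((m - 1)%nat, p * bar mub * x (m - 1)%nat 1%nat);
    (m, sb * x m 1%nat); ((m + 1)%nat, bar p * mub * x (m + 1)%nat 1%nat)] x.
Qed.

Lemma inflow_N0_1 x : inflow x N0 1%nat =
  p * th * bar muv * x (N0 - 1)%nat 0%nat + th * sv * x N0 0%nat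
  + th * muv * x (N0 + 1)%nat 0%nat
  + p * bar mub * x (N0 - 1)%nat 1%nat + sb * x N0 1%nat + bar p * mub * x (N0 + 1)%nat 1%nat.
Proof.
  inflow_by [((N0 - 1)%nat, p * th * bar muv * x (N0 - 1)%nat 0%nat);
    (N0, th * sv * x N0 0%nat); ((N0 + 1)%nat, th * muv * x (N0 + 1)%nat 0%nat)]
    [((N0 - 1)%nat, p * bar mub * x (N0 - 1)%nat 1%nat);
    (N0, sb * x N0 1%nat); ((N0 + 1)%nat, bar p * mub * x (N0 + 1)%nat 1%nat)] x.
Qed.

Lemma inflow_N0S_1 x : inflow x (N0 + 1)%nat 1%nat =
  p * th * bar muv * x N0 0%nat + th * bar muv * x (N0 + 1)%nat 0%nat
  + p * bar mub * x N0 1%nat + sb * x (N0 + 1)%nat 1%nat + bar p * mub * x (N0 + 2)%nat 1%nat.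
Proof.
  inflow_by [(N0, p * th * bar muv * x N0 0%nat);
    ((N0 + 1)%nat, th * bar muv * x (N0 + 1)%nat 0%nat)]
    [(N0, p * bar mub * x N0 1%nat);
    ((N0 + 1)%nat, sb * x (N0 + 1)%nat 1%nat);
    ((N0 + 2)%nat, bar p * mub * x (N0 + 2)%nat 1%nat)] x.
Qed.

Lemma inflow_m1 x m : (N0 + 2 <= m <= N1 - 1)%nat -> inflow x m 1%nat =
  p * bar mub * x (m - 1)%nat 1%nat + sb * x m 1%nat + bar p * mub * x (m + 1)%nat 1%nat.
Proof.
  intros Hm.
  inflow_by (@nil (nat * R))
    [((m - 1)%nat, p * bar mub * x (m - 1)%nat 1%nat);
    (m, sb * x m 1%nat); ((m + 1)%nat, bar p * mub * x (m + 1)%nat 1%nat)] x.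
Qed.

Lemma inflow_N1_1 x : inflow x N1 1%nat =
  p * bar mub * x (N1 - 1)%nat 1%nat + sb * x N1 1%nat + mub * x (N1 + 1)%nat 1%nat.
Proof.
  inflow_by (@nil (nat * R))
    [((N1 - 1)%nat, p * bar mub * x (N1 - 1)%nat 1%nat);
    (N1, sb * x N1 1%nat); ((N1 + 1)%nat, mub * x (N1 + 1)%nat 1%nat)] x.
Qed.

Lemma inflow_N1S_1 x : inflow x (N1 + 1)%nat 1%nat =
  p * bar mub * x N1 1%nat + bar mub * x (N1 + 1)%nat 1%nat.
Proof.
  inflow_by (@nil (nat * R))
    [(N1, p * bar mub * x N1 1%nat); ((N1 + 1)%nat, bar mub * x (N1 + 1)%nat 1%nat)] x.
Qed.

Lemma balance_of_invariant x :
  (forall n j, inOmega N0 N1 n j -> inflow x n j = x n j) -> balance x.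
Proof.
  intros H. constructor; intros;
  [ rewrite <- (H 0%nat 0%nat) at 1 by (left; lia); apply inflow_00
  | rewrite <- (H 1%nat 0%nat) at 1 by (left; lia); apply inflow_10
  | rewrite <- (H m 0%nat) at 1 by (left; lia); apply inflow_n0; auto
  | rewrite <- (H N0 0%nat) at 1 by (left; lia); apply inflow_N0_0
  | rewrite <- (H (N0 + 1)%nat 0%nat) at 1 by (left; lia); apply inflow_N0S_0
  | rewrite <- (H 1%nat 1%nat) at 1 by (right; lia); apply inflow_11
  | rewrite <- (H m 1%nat) at 1 by (right; lia); apply inflow_n1; auto
  | rewrite <- (H N0 1%nat) at 1 by (right; lia); apply inflow_N0_1
  | rewrite <- (H (N0 + 1)%nat 1%nat) at 1 by (right; lia); apply inflow_N0S_1
  | rewrite <- (H m 1%nat) at 1 by (right; lia); apply inflow_m1; auto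
  | rewrite <- (H N1 1%nat) at 1 by (right; lia); apply inflow_N1_1
  | rewrite <- (H (N1 + 1)%nat 1%nat) at 1 by (right; lia); apply inflow_N1S_1 ].
Qed.

Lemma invariant_of_balance x : balance x ->
  forall n j, inOmega N0 N1 n j -> inflow x n j = x n j.
Proof.
  intros B n j [[-> Hn]|[-> Hn]].
  - destruct (Nat.eq_dec n 0) as [->|]; [rewrite inflow_00; symmetry; apply B|].
    destruct (Nat.eq_dec n 1) as [->|]; [rewrite inflow_10; symmetry; apply B|].
    destruct (Nat.eq_dec n N0) as [->|]; [rewrite inflow_N0_0; symmetry; apply B|].
    destruct (Nat.eq_dec n (N0 + 1)) as [->|]; [rewrite inflow_N0S_0; symmetry; apply B|].
    rewrite inflow_n0 by lia; symmetry; apply B; lia.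
  - destruct (Nat.eq_dec n 1) as [->|]; [rewrite inflow_11; symmetry; apply B|].
    destruct (Nat.eq_dec n N0) as [->|]; [rewrite inflow_N0_1; symmetry; apply B|].
    destruct (Nat.eq_dec n (N0 + 1)) as [->|]; [rewrite inflow_N0S_1; symmetry; apply B|].
    destruct (Nat.eq_dec n N1) as [->|]; [rewrite inflow_N1_1; symmetry; apply B|].
    destruct (Nat.eq_dec n (N1 + 1)) as [->|]; [rewrite inflow_N1S_1; symmetry; apply B|].
    destruct (Nat.le_gt_cases n (N0 - 1)).
    + rewrite inflow_n1 by lia; symmetry; apply B; lia.
    + rewrite inflow_m1 by lia; symmetry; apply B; lia.
Qed.

Lemma balance_lincomb a b x y : balance x -> balance y ->
  balance (fun n j => a * x n j + b * y n j).
Proof.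
  intros Bx By. constructor; cbv beta; intros;
  [ rewrite (bal_00 x Bx) at 1; rewrite (bal_00 y By) at 1
  | rewrite (bal_10 x Bx) at 1; rewrite (bal_10 y By) at 1
  | rewrite (bal_n0 x Bx m) at 1 by auto; rewrite (bal_n0 y By m) at 1 by auto
  | rewrite (bal_N0_0 x Bx) at 1; rewrite (bal_N0_0 y By) at 1
  | rewrite (bal_N0S_0 x Bx) at 1; rewrite (bal_N0S_0 y By) at 1
  | rewrite (bal_11 x Bx) at 1; rewrite (bal_11 y By) at 1
  | rewrite (bal_n1 x Bx m) at 1 by auto; rewrite (bal_n1 y By m) at 1 by auto
  | rewrite (bal_N0_1 x Bx) at 1; rewrite (bal_N0_1 y By) at 1
  | rewrite (bal_N0S_1 x Bx) at 1; rewrite (bal_N0S_1 y By) at 1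
  | rewrite (bal_m1 x Bx m) at 1 by auto; rewrite (bal_m1 y By m) at 1 by auto
  | rewrite (bal_N1_1 x Bx) at 1; rewrite (bal_N1_1 y By) at 1
  | rewrite (bal_N1S_1 x Bx) at 1; rewrite (bal_N1S_1 y By) at 1 ]; ring.
Qed.

(** * Nonnegativity of the solutions *)

Lemma nonneg_of_mult_nonneg a y : 0 < a -> 0 <= a * y -> 0 <= y.
Proof.
  intros Ha H. destruct (Rle_or_lt 0 y); auto.
  assert (a * y < 0) by nra. lra.
Qed.

Ltac prob_pos := repeat apply Rmult_le_pos; unfold bar; lra.

(* Probability of the move (m+1,0) -> (m,0). *)
Definition down_rate0 (m : nat) : R :=
  if (m =? N0)%nat then bar th * muv else bar p * bar th * muv.

Definition net_up_flow0 (x : nat -> nat -> R) (m : nat) : R :=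
  p * bar th * bar muv * x m 0%nat - down_rate0 m * x (m + 1)%nat 0%nat.

Definition net_down_flow1 (x : nat -> nat -> R) (m : nat) : R :=
  bar p * mub * x (m + 1)%nat 1%nat - p * bar mub * x m 1%nat.

Lemma bal_level0 x m : balance x -> (2 <= m <= N0)%nat ->
  x m 0%nat = p * bar th * bar muv * x (m - 1)%nat 0%nat + bar th * sv * x m 0%nat
    + down_rate0 m * x (m + 1)%nat 0%nat.
Proof.
  intros B Hm. unfold down_rate0. destruct (Nat.eqb_spec m N0) as [->|].
  - apply (bal_N0_0 x B).
  - apply (bal_n0 x B); lia.
Qed.

Lemma level0_descent x : balance x -> 0 <= x (N0 + 1)%nat 0%nat ->
  forall m, (1 <= m <= N0)%nat ->
  0 <= x (m + 1)%nat 0%nat /\ 0 <= x m 0%nat /\ 0 <= net_up_flow0 x m.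
Proof.
  intros B Htop.
  assert (Hpos : 0 < p * bar th * bar muv) by (unfold bar; repeat apply Rmult_lt_0_compat; lra).
  enough (H : forall k, (k <= N0 - 1)%nat ->
    0 <= x (N0 - k + 1)%nat 0%nat /\ 0 <= x (N0 - k)%nat 0%nat /\ 0 <= net_up_flow0 x (N0 - k)).
  { intros m Hm. replace m with (N0 - (N0 - m))%nat by lia. apply H. lia. }
  induction k as [|k IH]; intros Hk.
  - rewrite Nat.sub_0_r. unfold net_up_flow0, down_rate0. rewrite Nat.eqb_refl.
    pose proof (bal_N0S_0 x B) as E.
    assert (E2 : p * bar th * bar muv * x N0 0%nat = (th + bar th * muv) * x (N0 + 1)%nat 0%nat)
      by (unfold bar in *; lra).
    split; [auto|split].
    + apply (nonneg_of_mult_nonneg (p * bar th * bar muv)); auto.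
      rewrite E2. apply Rmult_le_pos; [unfold bar; nra|auto].
    + rewrite E2. unfold bar in *. nra.
  - destruct IH as [IH1 [IH2 IH3]]; [lia|].
    replace (N0 - S k + 1)%nat with (N0 - k)%nat by lia.
    remember (N0 - k)%nat as m eqn:Hm.
    replace (N0 - S k)%nat with (m - 1)%nat by lia.
    pose proof (bal_level0 x m B ltac:(lia)) as E.
    unfold net_up_flow0 in *.
    replace (down_rate0 (m - 1)) with (bar p * bar th * muv)
      by (unfold down_rate0; destruct (Nat.eqb_spec (m - 1) N0); [lia|reflexivity]).
    replace (m - 1 + 1)%nat with m by lia.
    assert (0 <= th * x m 0%nat) by (apply Rmult_le_pos; lra).
    assert (E2 : p * bar th * bar muv * x (m - 1)%nat 0%nat - bar p * bar th * muv * x m 0%nat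
       = th * x m 0%nat + (p * bar th * bar muv * x m 0%nat - down_rate0 m * x (m + 1)%nat 0%nat))
      by (unfold s_nu, bar in *; lra).
    split; [auto|split]; [|lra].
    apply (nonneg_of_mult_nonneg (p * bar th * bar muv)); auto.
    assert (0 <= bar p * bar th * muv * x m 0%nat) by (apply Rmult_le_pos; [prob_pos|auto]).
    lra.
Qed.

Lemma level0_nonneg x : balance x -> 0 <= x (N0 + 1)%nat 0%nat ->
  (forall n, (n <= N0 + 1)%nat -> 0 <= x n 0%nat) /\
  0 <= p * x 0%nat 0%nat - bar p * muv * x 1%nat 0%nat.
Proof.
  intros B Htop.
  pose proof (level0_descent x B Htop 1 ltac:(lia)) as [H2 [H1 F1]].
  unfold net_up_flow0, down_rate0 in F1.
  replace (1 =? N0)%nat with false in F1 by (symmetry; apply Nat.eqb_neq; lia).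
  cbn [Nat.add Nat.sub] in *.
  pose proof (bal_10 x B) as E.
  assert (G : 0 <= p * x 0%nat 0%nat - bar p * muv * x 1%nat 0%nat).
  { apply (nonneg_of_mult_nonneg (bar th)); [unfold bar; lra|].
    assert (0 <= th * x 1%nat 0%nat) by (apply Rmult_le_pos; lra).
    unfold s_nu, bar in *. lra. }
  split; [|exact G].
  intros n Hn.
  destruct (Nat.eq_dec n 0) as [->|].
  - apply (nonneg_of_mult_nonneg p); [lra|].
    assert (0 <= bar p * muv * x 1%nat 0%nat) by (apply Rmult_le_pos; [prob_pos|auto]).
    lra.
  - destruct (Nat.eq_dec n (N0 + 1)) as [->|]; [auto|].
    apply (level0_descent x B Htop n); lia.
Qed.

Lemma net_down_flow1_decr x : balance x -> (forall n, (n <= N0 + 1)%nat -> 0 <= x n 0%nat) ->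
  forall m, (2 <= m <= N1 - 1)%nat -> net_down_flow1 x m <= net_down_flow1 x (m - 1).
Proof.
  intros B Hu m Hm. unfold net_down_flow1. replace (m - 1 + 1)%nat with m by lia.
  assert (P : forall a n, 0 <= a -> (n <= N0 + 1)%nat -> 0 <= a * x n 0%nat)
    by (intros; apply Rmult_le_pos; auto).
  assert (0 <= s_nu p muv) by (unfold s_nu, bar; nra).
  destruct (Nat.le_gt_cases m (N0 - 1)).
  - pose proof (bal_n1 x B m ltac:(lia)) as E.
    assert (0 <= p * th * bar muv * x (m - 1)%nat 0%nat) by (apply P; [prob_pos|lia]).
    assert (0 <= th * sv * x m 0%nat) by (apply P; [apply Rmult_le_pos; lra|lia]).
    assert (0 <= bar p * th * muv * x (m + 1)%nat 0%nat) by (apply P; [prob_pos|lia]).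
    unfold s_b, bar in *. lra.
  - destruct (Nat.eq_dec m N0) as [->|].
    + pose proof (bal_N0_1 x B) as E.
      assert (0 <= p * th * bar muv * x (N0 - 1)%nat 0%nat) by (apply P; [prob_pos|lia]).
      assert (0 <= th * sv * x N0 0%nat) by (apply P; [apply Rmult_le_pos; lra|lia]).
      assert (0 <= th * muv * x (N0 + 1)%nat 0%nat) by (apply P; [prob_pos|lia]).
      unfold s_b, bar in *. lra.
    + destruct (Nat.eq_dec m (N0 + 1)) as [->|].
      * pose proof (bal_N0S_1 x B) as E.
        replace (N0 + 1 + 1)%nat with (N0 + 2)%nat by lia.
        replace (N0 + 1 - 1)%nat with N0 by lia.
        assert (0 <= p * th * bar muv * x N0 0%nat) by (apply P; [prob_pos|lia]).
        assert (0 <= th * bar muv * x (N0 + 1)%nat 0%nat) by (apply P; [prob_pos|lia]).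
        unfold s_b, bar in *. lra.
      * pose proof (bal_m1 x B m ltac:(lia)) as E.
        unfold s_b, bar in *. lra.
Qed.

Lemma level1_nonneg x : balance x -> 0 <= x (N0 + 1)%nat 0%nat ->
  forall n, (1 <= n <= N1 + 1)%nat -> 0 <= x n 1%nat.
Proof.
  intros B Htop. destruct (level0_nonneg x B Htop) as [Hu G].
  assert (Hpm : 0 < bar p * mub) by (unfold bar; nra).
  assert (V1 : 0 <= x 1%nat 1%nat).
  { pose proof (bal_00 x B) as E. apply (nonneg_of_mult_nonneg (bar p * mub)); auto.
    unfold bar in *; lra. }
  assert (Top : net_down_flow1 x (N1 - 1) = 0).
  { pose proof (bal_N1_1 x B). pose proof (bal_N1S_1 x B).
    unfold net_down_flow1. replace (N1 - 1 + 1)%nat with N1 by lia.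
    unfold s_b, bar in *; lra. }
  assert (Dn : forall k, (k <= N1 - 2)%nat -> 0 <= net_down_flow1 x (N1 - 1 - k)).
  { induction k as [|k IH]; intros Hk.
    - rewrite Nat.sub_0_r. lra.
    - pose proof (net_down_flow1_decr x B Hu (N1 - 1 - k) ltac:(lia)) as D.
      replace (N1 - 1 - S k)%nat with (N1 - 1 - k - 1)%nat by lia.
      specialize (IH ltac:(lia)). lra. }
  assert (Up : forall n, (1 <= n <= N1)%nat -> 0 <= x n 1%nat).
  { induction n as [|n IH]; intros Hn; [lia|].
    destruct (Nat.eq_dec n 0) as [->|]; [exact V1|].
    specialize (IH ltac:(lia)).
    pose proof (Dn (N1 - 1 - n)%nat ltac:(lia)) as D.
    replace (N1 - 1 - (N1 - 1 - n))%nat with n in D by lia.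
    unfold net_down_flow1 in D. replace (n + 1)%nat with (S n) in D by lia.
    apply (nonneg_of_mult_nonneg (bar p * mub)); auto.
    assert (0 <= p * bar mub * x n 1%nat) by (apply Rmult_le_pos; [prob_pos|auto]).
    lra. }
  intros n Hn. destruct (Nat.eq_dec n (N1 + 1)) as [->|]; [|apply Up; lia].
  pose proof (bal_N1S_1 x B) as E. apply (nonneg_of_mult_nonneg mub); [lra|].
  assert (0 <= p * bar mub * x N1 1%nat) by (apply Rmult_le_pos; [prob_pos|apply Up; lia]).
  unfold bar in *; lra.
Qed.

Lemma balance_nonneg x : balance x -> 0 <= x (N0 + 1)%nat 0%nat ->
  forall n j, inOmega N0 N1 n j -> 0 <= x n j.
Proof.
  intros B Htop n j [[-> Hn]|[-> Hn]].
  - apply (proj1 (level0_nonneg x B Htop)); lia.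
  - apply level1_nonneg; auto; lia.
Qed.

Lemma balance_zero x : balance x -> x (N0 + 1)%nat 0%nat = 0 ->
  forall n j, inOmega N0 N1 n j -> x n j = 0.
Proof.
  intros B Htop n j Hnj.
  pose proof (balance_nonneg x B ltac:(lra) n j Hnj).
  pose proof (balance_lincomb (-1) 0 x x B B) as B'.
  pose proof (balance_nonneg _ B' ltac:(cbv beta; lra) n j Hnj). cbv beta in *. lra.
Qed.

Lemma balance_proportional x y : balance x -> balance y -> y (N0 + 1)%nat 0%nat <> 0 ->
  forall n j, inOmega N0 N1 n j -> x n j = x (N0 + 1)%nat 0%nat / y (N0 + 1)%nat 0%nat * y n j.
Proof.
  intros Bx By Hy n j Hnj.
  set (t := x (N0 + 1)%nat 0%nat / y (N0 + 1)%nat 0%nat).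
  pose proof (balance_zero _ (balance_lincomb 1 (- t) x y Bx By)
    ltac:(cbv beta; unfold t; field; auto) n j Hnj).
  cbv beta in *. lra.
Qed.

End Balance.

(** * The roots x1*, x2* *)

Ltac nonzero := unfold bar in *; repeat split; first [lra | nra].

Section Roots.
Variables (p muv th : R).
Hypothesis (hp : 0 < p < 1) (hmuv : 0 < muv < 1) (hth : 0 < th < 1).
Local Notation x1 := (x1star p muv th).
Local Notation x2 := (x2star p muv th).

(* The level-0 equations bal_n0 form a linear recurrence with this
   characteristic polynomial. *)
Definition char_poly (x : R) : R :=
  bar th * bar p * muv * x ^ 2 - gam p muv th * x + bar th * p * bar muv.

Lemma lead_coef_pos : 0 < bar th * bar p * muv.
Proof. unfold bar. repeat apply Rmult_lt_0_compat; lra. Qed.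

Lemma disc_nonneg : 0 <= Defs.disc p muv th.
Proof.
  unfold Defs.disc, gam, bar.
  set (a := p * (1 - muv)). set (b := (1 - p) * muv).
  assert (0 <= a) by (unfold a; nra). assert (0 <= b) by (unfold b; nra).
  replace (4 * (1 - th) ^ 2 * p * (1 - p) * muv * (1 - muv)) with (4 * (1 - th) ^ 2 * a * b)
    by (unfold a, b; ring).
  replace (th + (1 - th) * p * (1 - muv) + (1 - th) * (1 - p) * muv)
    with (th + (1 - th) * (a + b)) by (unfold a, b; ring).
  set (y := (1 - th) * (a + b)).
  assert (0 <= y) by (unfold y; nra).
  assert (y ^ 2 - 4 * (1 - th) ^ 2 * a * b = ((1 - th) * (a - b)) ^ 2) by (unfold y; ring).
  assert (0 <= ((1 - th) * (a - b)) ^ 2) by apply pow2_ge_0.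
  assert (0 <= th * (th + 2 * y)) by (apply Rmult_le_pos; lra).
  replace ((th + y) ^ 2) with (y ^ 2 + th * (th + 2 * y)) by ring.
  lra.
Qed.

Lemma roots_sum : bar th * bar p * muv * (x1 + x2) = gam p muv th.
Proof. unfold x1star, x2star. field. nonzero. Qed.

Lemma roots_prod : bar th * bar p * muv * (x1 * x2) = bar th * p * bar muv.
Proof.
  pose proof lead_coef_pos. pose proof disc_nonneg.
  unfold x1star, x2star.
  replace ((gam p muv th + sqrt (Defs.disc p muv th)) / (2 * bar th * bar p * muv) *
    ((gam p muv th - sqrt (Defs.disc p muv th)) / (2 * bar th * bar p * muv))) with
    ((gam p muv th ^ 2 - sqrt (Defs.disc p muv th) * sqrt (Defs.disc p muv th))
       / (4 * (bar th * bar p * muv) ^ 2)) by (field; nonzero).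
  rewrite sqrt_sqrt by auto. unfold Defs.disc. field. nonzero.
Qed.

Lemma char_poly_x1 : char_poly x1 = 0.
Proof. unfold char_poly. rewrite <- roots_sum, <- roots_prod. ring. Qed.

Lemma char_poly_x2 : char_poly x2 = 0.
Proof. unfold char_poly. rewrite <- roots_sum, <- roots_prod. ring. Qed.

Lemma char_poly_root_neq_1 x : char_poly x = 0 -> x - 1 <> 0.
Proof. intros H E. replace x with 1 in H by lra. unfold char_poly, gam, bar in H. lra. Qed.

Lemma roots_prod_pos : 0 < x1 * x2.
Proof.
  pose proof lead_coef_pos.
  apply (Rmult_lt_reg_l (bar th * bar p * muv)); auto.
  rewrite roots_prod, Rmult_0_r. unfold bar. repeat apply Rmult_lt_0_compat; lra.
Qed.

Lemma x2_lt_1_lt_x1 : x2 < 1 < x1.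
Proof.
  pose proof lead_coef_pos. pose proof disc_nonneg.
  assert (D : x1 - x2 = sqrt (Defs.disc p muv th) / (bar th * bar p * muv))
    by (unfold x1star, x2star; field; nonzero).
  assert (0 <= x1 - x2).
  { rewrite D. apply Rmult_le_pos; [apply sqrt_pos|left; apply Rinv_0_lt_compat; lra]. }
  (* the characteristic polynomial is -th at 1 *)
  assert (E : bar th * bar p * muv * ((1 - x1) * (1 - x2)) = - th).
  { replace (bar th * bar p * muv * ((1 - x1) * (1 - x2))) with
      (bar th * bar p * muv - bar th * bar p * muv * (x1 + x2)
       + bar th * bar p * muv * (x1 * x2)) by ring.
    rewrite roots_sum, roots_prod. unfold gam, bar. ring. }
  assert ((1 - x1) * (1 - x2) < 0).
  { destruct (Rlt_or_le ((1 - x1) * (1 - x2)) 0); auto.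
    assert (0 <= bar th * bar p * muv * ((1 - x1) * (1 - x2))) by (apply Rmult_le_pos; lra).
    lra. }
  nra.
Qed.

Lemma x2_pos : 0 < x2.
Proof. pose proof x2_lt_1_lt_x1. pose proof roots_prod_pos. nra. Qed.

End Roots.

(** * The closed form solves the balance equations *)

Lemma tA1_scal p mub muv th N0 c : tA1 p mub muv th N0 c = c * tA1 p mub muv th N0 1.
Proof. unfold tA1; cbv zeta. unfold Rdiv; ring. Qed.

Lemma tB1_scal p mub muv th N0 c : tB1 p mub muv th N0 c = c * tB1 p mub muv th N0 1.
Proof. unfold tB1; cbv zeta. unfold Rdiv; ring. Qed.

Lemma tC1_scal p mub muv th N0 c : tC1 p mub muv th N0 c = c * tC1 p mub muv th N0 1.
Proof. unfold tC1; cbv zeta. rewrite (tA1_scal _ _ _ _ _ c). unfold Rdiv; ring. Qed.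

Lemma tD1_scal p mub muv th N0 c : tD1 p mub muv th N0 c = c * tD1 p mub muv th N0 1.
Proof. unfold tD1; cbv zeta. rewrite (tB1_scal _ _ _ _ _ c). unfold Rdiv; ring. Qed.

Ltac rewrite_scal c :=
  rewrite ?(tA1_scal _ _ _ _ _ c), ?(tB1_scal _ _ _ _ _ c),
    ?(tC1_scal _ _ _ _ _ c), ?(tD1_scal _ _ _ _ _ c).

Lemma tA2_scal p mub muv th N0 c : tA2 p mub muv th N0 c = c * tA2 p mub muv th N0 1.
Proof. unfold tA2; cbv zeta. rewrite_scal c. unfold Rdiv; ring. Qed.

Lemma tB2_scal p mub muv th N0 c : tB2 p mub muv th N0 c = c * tB2 p mub muv th N0 1.
Proof. unfold tB2; cbv zeta. rewrite_scal c. unfold Rdiv; ring. Qed.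

Lemma piN0p1_1_scal p mub muv th N0 c :
  piN0p1_1 p mub muv th N0 c = c * piN0p1_1 p mub muv th N0 1.
Proof.
  unfold piN0p1_1; cbv zeta. rewrite_scal c.
  rewrite (tA2_scal _ _ _ _ _ c), (tB2_scal _ _ _ _ _ c). unfold Rdiv; ring.
Qed.

Lemma closed_form_scal p mub muv th N0 N1 c n j :
  closed_form p mub muv th N0 c N1 n j = c * closed_form p mub muv th N0 1 N1 n j.
Proof.
  unfold closed_form; cbv zeta. rewrite_scal c.
  rewrite (tA2_scal _ _ _ _ _ c), (tB2_scal _ _ _ _ _ c), (piN0p1_1_scal _ _ _ _ _ c).
  repeat match goal with |- context [if ?b then _ else _] => destruct b end; ring.
Qed.

Section ClosedForm.
Variables (p mub muv th : R) (N0 N1 : nat).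
Hypothesis (hN0 : (2 <= N0)%nat) (hN1 : (N0 + 2 <= N1)%nat).
Hypothesis (hp : 0 < p < 1) (hmub : 0 < mub < 1) (hmuv : 0 < muv < 1) (hth : 0 < th < 1).
Hypothesis (halpha : alpha p mub < 1) (hDelta : DeltaQ p muv th N0 <> 0)
  (hx1 : alpha p mub <> x1star p muv th) (hx2 : alpha p mub <> x2star p muv th).

Local Notation x1 := (x1star p muv th).
Local Notation x2 := (x2star p muv th).
Local Notation al := (alpha p mub).
Local Notation sv := (s_nu p muv).
Local Notation sb := (s_b p mub).
Local Notation CF c := (closed_form p mub muv th N0 c N1).
Local Notation A1 c := (tA1 p mub muv th N0 c).
Local Notation B1 c := (tB1 p mub muv th N0 c).
Local Notation C1 c := (tC1 p mub muv th N0 c).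
Local Notation D1 c := (tD1 p mub muv th N0 c).
Local Notation A2 c := (tA2 p mub muv th N0 c).
Local Notation B2 c := (tB2 p mub muv th N0 c).
Local Notation P1 c := (piN0p1_1 p mub muv th N0 c).

Lemma pbar_mub_pos : 0 < bar p * mub.
Proof. unfold bar. apply Rmult_lt_0_compat; lra. Qed.

Lemma alpha_pos : 0 < al.
Proof. pose proof pbar_mub_pos. unfold alpha. apply Rdiv_lt_0_compat; auto. unfold bar; nra. Qed.

Lemma alpha_mul : al * (bar p * mub) = p * bar mub.
Proof. unfold alpha. field. nonzero. Qed.

Lemma arrival_lt_service : p * (1 - mub) < (1 - p) * mub.
Proof.
  pose proof pbar_mub_pos. pose proof alpha_mul. unfold bar in *.
  assert (al * ((1 - p) * mub) < 1 * ((1 - p) * mub)) by (apply Rmult_lt_compat_r; lra).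
  lra.
Qed.

Lemma tC1_den_neq0 : p * bar mub - bar p * mub * x1 <> 0.
Proof.
  pose proof pbar_mub_pos. rewrite <- alpha_mul. intro E. apply hx1.
  apply (Rmult_eq_reg_r (bar p * mub)); lra.
Qed.

Lemma tD1_den_neq0 : bar p * mub * x2 - p * bar mub <> 0.
Proof.
  pose proof pbar_mub_pos. rewrite <- alpha_mul. intro E. apply hx2.
  apply (Rmult_eq_reg_r (bar p * mub)); lra.
Qed.

Ltac nonzero_coeffs :=
  pose proof arrival_lt_service; pose proof (x2_lt_1_lt_x1 p muv th hp hmuv hth);
  pose proof (x2_pos p muv th hp hmuv hth); pose proof pbar_mub_pos; pose proof alpha_pos;
  pose proof alpha_mul; pose proof (roots_prod_pos p muv th hp hmuv hth);
  pose proof tC1_den_neq0; pose proof tD1_den_neq0;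
  let h := fresh in (assert (h := tD1_den_neq0); unfold bar in h; apply Rdichotomy in h);
  let h := fresh in (assert (h := hDelta); apply Rdichotomy in h);
  repeat split; try assumption; unfold bar in *; try lra; try nra.

Lemma closed_form_00 c :
  CF c 0%nat 0%nat = bar p * muv / p * (A1 c * x1 + B1 c * x2) + bar p * mub / p * c.
Proof. reflexivity. Qed.

Lemma closed_form_n0 c n : (1 <= n <= N0)%nat -> CF c n 0%nat = A1 c * x1 ^ n + B1 c * x2 ^ n.
Proof. intros Hn. unfold closed_form. decide_nat_tests. reflexivity. Qed.

Lemma closed_form_N0S_0 c : CF c (N0 + 1)%nat 0%nat =
  p * bar th * bar muv / (1 - bar th * bar muv) * (A1 c * x1 ^ N0 + B1 c * x2 ^ N0).
Proof. unfold closed_form. decide_nat_tests. reflexivity. Qed.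

Lemma closed_form_n1 c n : (1 <= n <= N0)%nat ->
  CF c n 1%nat = A2 c + B2 c * al ^ n + C1 c * x1 ^ n + D1 c * x2 ^ n.
Proof. intros Hn. unfold closed_form. decide_nat_tests. reflexivity. Qed.

Lemma closed_form_m1 c n : (N0 + 1 <= n <= N1)%nat -> CF c n 1%nat = al ^ (n - N0 - 1) * P1 c.
Proof.
  intros Hn. unfold closed_form. decide_nat_tests.
  - replace (n - N0 - 1)%nat with 0%nat by lia. simpl. ring.
  - reflexivity.
Qed.

Lemma closed_form_N1S_1 c : CF c (N1 + 1)%nat 1%nat = bar p * al ^ (N1 - N0) * P1 c.
Proof. unfold closed_form. decide_nat_tests. reflexivity. Qed.

Lemma closed_form_11 c : CF c 1%nat 1%nat = c.
Proof.
  rewrite closed_form_n1 by lia.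
  unfold tA2, tB2; cbv zeta. unfold alpha, bar. field. nonzero_coeffs.
Qed.

Lemma afun_root x : char_poly p muv th x = 0 ->
  afun p muv th x = bar th * (p * bar muv - bar p * muv * x).
Proof. unfold char_poly, afun, gam, bar. lra. Qed.

Lemma DeltaQ_roots : DeltaQ p muv th N0 = bar th *
  ((p * bar muv - bar p * muv * x2) * bfun p muv th N0 x1
   - (p * bar muv - bar p * muv * x1) * bfun p muv th N0 x2).
Proof.
  unfold DeltaQ.
  rewrite (afun_root _ (char_poly_x1 p muv th hp hmuv hth)),
    (afun_root _ (char_poly_x2 p muv th hp hmuv hth)).
  ring.
Qed.

(* A1, B1 solve the 2x2 system formed by this relation (the (1,0) equation)
   and the (N0,0) equation, whose determinant is Delta. *)
Lemma boundary_10 c :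
  p * bar muv * (A1 c + B1 c) - bar p * muv * (A1 c * x1 + B1 c * x2) = bar p * mub * c.
Proof.
  pose proof hDelta as HD.
  unfold tA1, tB1; cbv zeta. rewrite DeltaQ_roots in *.
  set (b1 := bfun p muv th N0 x1) in *. set (b2 := bfun p muv th N0 x2) in *.
  field. split; [intro E; apply HD; rewrite E; ring|unfold bar; lra].
Qed.

Lemma pow_N0 x : x ^ N0 = x * x ^ (N0 - 1).
Proof. replace N0 with (S (N0 - 1)) at 1 by lia. reflexivity. Qed.

Lemma closed_form_bal_N0_0 c : CF c N0 0%nat = p * bar th * bar muv * CF c (N0 - 1)%nat 0%nat
  + bar th * sv * CF c N0 0%nat + bar th * muv * CF c (N0 + 1)%nat 0%nat.
Proof.
  rewrite (closed_form_n0 c N0), (closed_form_n0 c (N0 - 1)), closed_form_N0S_0 by lia.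
  unfold tA1, tB1, bfun; cbv zeta. rewrite !(pow_N0 x1), !(pow_N0 x2).
  set (Y1 := x1 ^ (N0 - 1)). set (Y2 := x2 ^ (N0 - 1)). set (D := DeltaQ p muv th N0).
  unfold kappa, s_nu, bar. field. nonzero_coeffs.
Qed.

Lemma tA2_via_tA1_tB1 c : bar p * mub * A2 c * (1 - al) =
  bar p * mub * bar th * c + th * (A1 c * (x1 / (x1 - 1)) + B1 c * (x2 / (x2 - 1))).
Proof.
  pose proof pbar_mub_pos.
  replace (bar p * mub * A2 c * (1 - al)) with ((bar p * mub * (1 - al)) * A2 c) by ring.
  unfold tA2; cbv zeta. unfold Rdiv at 1. rewrite Rmult_comm, Rmult_assoc, Rinv_l, Rmult_1_r
    by (apply Rmult_integral_contrapositive; split; lra).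
  unfold tC1, tD1; cbv zeta. set (a := A1 c). set (b := B1 c).
  unfold alpha, bar. field. nonzero_coeffs.
Qed.

Lemma root_ratio x : char_poly p muv th x = 0 ->
  th * (x / (x - 1)) = bar th * (bar p * muv * x - p * bar muv).
Proof.
  intros HQ. pose proof (char_poly_root_neq_1 p muv th hth x HQ) as H1.
  assert (E : bar th * (bar p * muv * x - p * bar muv) * (x - 1) = char_poly p muv th x + th * x)
    by (unfold char_poly, gam, bar; ring).
  rewrite HQ in E. apply (Rmult_eq_reg_r (x - 1)); auto.
  rewrite E. field. auto.
Qed.

Lemma root_top_identity x Y : char_poly p muv th x = 0 ->
  th * (x * Y * (p * bar th * bar muv / (1 - bar th * bar muv) + x / (x - 1))) =
  x * Y * (1 - bar th * sv) - p * bar th * bar muv * Y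
  - bar th * muv * (p * bar th * bar muv / (1 - bar th * bar muv)) * (x * Y).
Proof.
  intros HQ.
  assert (nz1 : 1 - bar th * bar muv <> 0) by (unfold bar; nra).
  replace (th * (x * Y * (p * bar th * bar muv / (1 - bar th * bar muv) + x / (x - 1))))
    with (x * Y * (th * (p * bar th * bar muv / (1 - bar th * bar muv)))
          + x * Y * (th * (x / (x - 1)))) by ring.
  rewrite (root_ratio x HQ).
  match goal with |- ?L = ?R => assert (E : L - R = Y * char_poly p muv th x) end.
  { unfold char_poly, gam, s_nu, bar in *. field. auto. }
  rewrite HQ in E. lra.
Qed.

(* The relation tying A2 to the level-0 coefficients that the (N0,1) equation
   requires; it follows from the two level-0 boundary equations. *)
Lemma tA2_boundary c : bar p * mub * A2 c * (1 - al) =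
  th * (A1 c * x1 ^ N0 * (p * bar th * bar muv / (1 - bar th * bar muv) + x1 / (x1 - 1))
      + B1 c * x2 ^ N0 * (p * bar th * bar muv / (1 - bar th * bar muv) + x2 / (x2 - 1))).
Proof.
  pose proof (char_poly_x1 p muv th hp hmuv hth) as Q1.
  pose proof (char_poly_x2 p muv th hp hmuv hth) as Q2.
  rewrite tA2_via_tA1_tB1.
  pose proof (boundary_10 c) as K.
  pose proof (closed_form_bal_N0_0 c) as L.
  rewrite (closed_form_n0 c N0), (closed_form_n0 c (N0 - 1)), closed_form_N0S_0 in L by lia.
  rewrite !(pow_N0 x1), !(pow_N0 x2) in *.
  pose proof (root_top_identity x1 (x1 ^ (N0 - 1)) Q1) as T1.
  pose proof (root_top_identity x2 (x2 ^ (N0 - 1)) Q2) as T2.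
  pose proof (root_ratio x1 Q1) as F1. pose proof (root_ratio x2 Q2) as F2.
  set (Y1 := x1 ^ (N0 - 1)) in *. set (Y2 := x2 ^ (N0 - 1)) in *.
  set (a := A1 c) in *. set (b := B1 c) in *.
  set (K' := p * bar th * bar muv / (1 - bar th * bar muv)) in *.
  set (f1 := x1 / (x1 - 1)) in *. set (f2 := x2 / (x2 - 1)) in *.
  transitivity 0.
  - replace (bar p * mub * bar th * c + th * (a * f1 + b * f2)) with
      (bar p * mub * bar th * c + a * (th * f1) + b * (th * f2)) by ring.
    rewrite F1, F2.
    match type of K with ?KL = _ => transitivity (bar th * (bar p * mub * c - KL)) end; [ring|].
    rewrite K. ring.
  - replace (th * (a * (x1 * Y1) * (K' + f1) + b * (x2 * Y2) * (K' + f2)))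
      with (a * (th * (x1 * Y1 * (K' + f1))) + b * (th * (x2 * Y2 * (K' + f2)))) by ring.
    rewrite T1, T2. lra.
Qed.

Lemma closed_form_bal_00 c : CF c 0%nat 0%nat = bar p * CF c 0%nat 0%nat
  + bar p * muv * CF c 1%nat 0%nat + bar p * mub * CF c 1%nat 1%nat.
Proof.
  rewrite closed_form_00, (closed_form_n0 c 1), closed_form_11 by lia.
  unfold bar. field. lra.
Qed.

Lemma closed_form_bal_10 c : CF c 1%nat 0%nat = p * bar th * CF c 0%nat 0%nat
  + bar th * sv * CF c 1%nat 0%nat + bar p * bar th * muv * CF c 2%nat 0%nat.
Proof.
  rewrite closed_form_00, (closed_form_n0 c 1), (closed_form_n0 c 2) by lia.
  pose proof (boundary_10 c) as K.
  pose proof (char_poly_x1 p muv th hp hmuv hth) as Q1.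
  pose proof (char_poly_x2 p muv th hp hmuv hth) as Q2.
  match goal with |- ?L = ?R => assert (E : L - R =
    bar th * (p * bar muv * (A1 c + B1 c) - bar p * muv * (A1 c * x1 + B1 c * x2)
              - bar p * mub * c) - (A1 c * char_poly p muv th x1 + B1 c * char_poly p muv th x2))
    by (unfold char_poly, gam, s_nu, bar; field; lra) end.
  rewrite K, Q1, Q2 in E. lra.
Qed.

Lemma closed_form_bal_n0 c m : (2 <= m <= N0 - 1)%nat ->
  CF c m 0%nat = p * bar th * bar muv * CF c (m - 1)%nat 0%nat + bar th * sv * CF c m 0%nat
    + bar p * bar th * muv * CF c (m + 1)%nat 0%nat.
Proof.
  intros Hm. rewrite !closed_form_n0 by lia.
  destruct m as [|k]; [lia|]. replace (S k - 1)%nat with k by lia.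
  replace (S k + 1)%nat with (S (S k)) by lia. rewrite <- !tech_pow_Rmult.
  pose proof (char_poly_x1 p muv th hp hmuv hth) as Q1.
  pose proof (char_poly_x2 p muv th hp hmuv hth) as Q2.
  match goal with |- ?L = ?R => assert (E : L - R =
    - (A1 c * x1 ^ k * char_poly p muv th x1 + B1 c * x2 ^ k * char_poly p muv th x2))
    by (unfold char_poly, gam, s_nu, bar; ring) end.
  rewrite Q1, Q2 in E. lra.
Qed.

Lemma closed_form_bal_N0S_0 c : CF c (N0 + 1)%nat 0%nat =
  p * bar th * bar muv * CF c N0 0%nat + bar th * bar muv * CF c (N0 + 1)%nat 0%nat.
Proof. rewrite closed_form_N0S_0, closed_form_n0 by lia. unfold bar. field. nra. Qed.

Lemma closed_form_bal_11 c : CF c 1%nat 1%nat = p * th * CF c 0%nat 0%nat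
  + th * sv * CF c 1%nat 0%nat + bar p * th * muv * CF c 2%nat 0%nat
  + sb * CF c 1%nat 1%nat + bar p * mub * CF c 2%nat 1%nat.
Proof.
  rewrite closed_form_00, (closed_form_n0 c 1), (closed_form_n0 c 2),
    (closed_form_n1 c 1), (closed_form_n1 c 2) by lia.
  unfold tA2, tB2; cbv zeta. unfold alpha, s_nu, s_b, bar. field. nonzero_coeffs.
Qed.

Lemma closed_form_bal_n1 c m : (2 <= m <= N0 - 1)%nat ->
  CF c m 1%nat = p * th * bar muv * CF c (m - 1)%nat 0%nat + th * sv * CF c m 0%nat
    + bar p * th * muv * CF c (m + 1)%nat 0%nat
    + p * bar mub * CF c (m - 1)%nat 1%nat + sb * CF c m 1%nat
    + bar p * mub * CF c (m + 1)%nat 1%nat.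
Proof.
  intros Hm. rewrite !closed_form_n0, !closed_form_n1 by lia.
  destruct m as [|k]; [lia|]. replace (S k - 1)%nat with k by lia.
  replace (S k + 1)%nat with (S (S k)) by lia. rewrite <- !tech_pow_Rmult.
  set (z1 := x1 ^ k). set (z2 := x2 ^ k). set (z3 := al ^ k).
  unfold tC1, tD1; cbv zeta.
  set (a := A1 c). set (b := B1 c). set (a2 := A2 c). set (b2 := B2 c).
  unfold alpha, s_nu, s_b, bar. field. nonzero_coeffs.
Qed.

Lemma closed_form_bal_N0_1 c : CF c N0 1%nat =
  p * th * bar muv * CF c (N0 - 1)%nat 0%nat + th * sv * CF c N0 0%nat
  + th * muv * CF c (N0 + 1)%nat 0%nat
  + p * bar mub * CF c (N0 - 1)%nat 1%nat + sb * CF c N0 1%nat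
  + bar p * mub * CF c (N0 + 1)%nat 1%nat.
Proof.
  rewrite (closed_form_n1 c N0), (closed_form_n0 c (N0 - 1)), (closed_form_n0 c N0),
    closed_form_N0S_0, (closed_form_n1 c (N0 - 1)), (closed_form_m1 c (N0 + 1)) by lia.
  replace (N0 + 1 - N0 - 1)%nat with 0%nat by lia.
  pose proof (tA2_boundary c) as R.
  unfold piN0p1_1, tC1, tD1; cbv zeta.
  rewrite !(pow_N0 x1), !(pow_N0 x2), !(pow_N0 al) in *.
  set (Y1 := x1 ^ (N0 - 1)) in *. set (Y2 := x2 ^ (N0 - 1)) in *.
  set (aY := al ^ (N0 - 1)) in *.
  set (a := A1 c) in *. set (b := B1 c) in *. set (a2 := A2 c) in *. set (b2 := B2 c) in *.
  match type of R with ?RL = ?RR => match goal with |- ?L = ?RG =>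
    assert (E : L - RG = RL - RR) by (unfold alpha, s_nu, s_b, bar; field; nonzero_coeffs)
  end end.
  lra.
Qed.

Lemma closed_form_bal_N0S_1 c : CF c (N0 + 1)%nat 1%nat =
  p * th * bar muv * CF c N0 0%nat + th * bar muv * CF c (N0 + 1)%nat 0%nat
  + p * bar mub * CF c N0 1%nat + sb * CF c (N0 + 1)%nat 1%nat
  + bar p * mub * CF c (N0 + 2)%nat 1%nat.
Proof.
  rewrite (closed_form_m1 c (N0 + 1)), (closed_form_m1 c (N0 + 2)), (closed_form_n0 c N0),
    closed_form_N0S_0, (closed_form_n1 c N0) by lia.
  replace (N0 + 1 - N0 - 1)%nat with 0%nat by lia.
  replace (N0 + 2 - N0 - 1)%nat with 1%nat by lia.
  unfold piN0p1_1; cbv zeta.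
  set (X1 := x1 ^ N0). set (X2 := x2 ^ N0). set (aN := al ^ N0).
  set (a := A1 c). set (b := B1 c). set (a2 := A2 c). set (b2 := B2 c).
  set (c1 := C1 c). set (d1 := D1 c).
  unfold alpha, s_nu, s_b, bar. field. nonzero_coeffs.
Qed.

Lemma closed_form_bal_m1 c m : (N0 + 2 <= m <= N1 - 1)%nat ->
  CF c m 1%nat = p * bar mub * CF c (m - 1)%nat 1%nat + sb * CF c m 1%nat
    + bar p * mub * CF c (m + 1)%nat 1%nat.
Proof.
  intros Hm. rewrite !closed_form_m1 by lia.
  replace (m - N0 - 1)%nat with (S (m - N0 - 2)) by lia.
  replace (m - 1 - N0 - 1)%nat with (m - N0 - 2)%nat by lia.
  replace (m + 1 - N0 - 1)%nat with (S (S (m - N0 - 2))) by lia.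
  rewrite <- !tech_pow_Rmult. set (z := al ^ (m - N0 - 2)). set (P := P1 c).
  unfold s_b, alpha, bar. field. nonzero_coeffs.
Qed.

Lemma closed_form_bal_N1_1 c : CF c N1 1%nat =
  p * bar mub * CF c (N1 - 1)%nat 1%nat + sb * CF c N1 1%nat + mub * CF c (N1 + 1)%nat 1%nat.
Proof.
  rewrite (closed_form_m1 c N1), (closed_form_m1 c (N1 - 1)), closed_form_N1S_1 by lia.
  remember (N1 - N0 - 2)%nat as k eqn:Hk.
  replace (N1 - N0 - 1)%nat with (S k) by lia.
  replace (N1 - 1 - N0 - 1)%nat with k by lia.
  replace (N1 - N0)%nat with (S (S k)) by lia.
  rewrite <- !tech_pow_Rmult. set (z := al ^ k). set (P := P1 c).
  unfold s_b, alpha, bar. field. nonzero_coeffs.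
Qed.

Lemma closed_form_bal_N1S_1 c : CF c (N1 + 1)%nat 1%nat =
  p * bar mub * CF c N1 1%nat + bar mub * CF c (N1 + 1)%nat 1%nat.
Proof.
  rewrite (closed_form_m1 c N1), closed_form_N1S_1 by lia.
  remember (N1 - N0 - 2)%nat as k eqn:Hk.
  replace (N1 - N0 - 1)%nat with (S k) by lia.
  replace (N1 - N0)%nat with (S (S k)) by lia.
  rewrite <- !tech_pow_Rmult. set (z := al ^ k). set (P := P1 c).
  unfold s_b, alpha, bar. field. nonzero_coeffs.
Qed.

Lemma closed_form_balance c : balance p mub muv th N0 N1 (CF c).
Proof.
  constructor.
  - apply closed_form_bal_00.
  - apply closed_form_bal_10.
  - apply closed_form_bal_n0.
  - apply closed_form_bal_N0_0.
  - apply closed_form_bal_N0S_0.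
  - apply closed_form_bal_11.
  - apply closed_form_bal_n1.
  - apply closed_form_bal_N0_1.
  - apply closed_form_bal_N0S_1.
  - apply closed_form_bal_m1.
  - apply closed_form_bal_N1_1.
  - apply closed_form_bal_N1S_1.
Qed.

End ClosedForm.

Section Stationary.
Variables (p mub muv th : R) (N0 N1 : nat).
Hypothesis (hN0 : (2 <= N0)%nat) (hN1 : (N0 + 2 <= N1)%nat).
Hypothesis (hp : 0 < p < 1) (hmub : 0 < mub < 1) (hmuv : 0 < muv < 1) (hth : 0 < th < 1).
Hypothesis (halpha : alpha p mub < 1) (hDelta : DeltaQ p muv th N0 <> 0)
  (hx1 : alpha p mub <> x1star p muv th) (hx2 : alpha p mub <> x2star p muv th).

Local Notation CF c := (closed_form p mub muv th N0 c N1).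
Local Notation mass := (sum_omega N0 N1 (CF 1)).

Let CF_balance c := closed_form_balance p mub muv th N0 N1 hN0 hN1 hp hmub hmuv hth
  halpha hDelta hx1 hx2 c.
Let CF_11 c := closed_form_11 p mub muv th N0 N1 hN0 hN1 hp hmub hmuv hth
  halpha hDelta hx1 hx2 c.

Lemma closed_form_top_neq0 : CF 1 (N0 + 1)%nat 0%nat <> 0.
Proof.
  intro E.
  pose proof (balance_zero p mub muv th N0 N1 hN0 hN1 hp hmub hmuv hth _ (CF_balance 1) E
    1 1 ltac:(right; lia)) as Z.
  rewrite CF_11 in Z. lra.
Qed.

Lemma closed_form_nonneg n j : inOmega N0 N1 n j -> 0 <= CF 1 n j.
Proof.
  intros Hnj. apply (balance_nonneg p mub muv th N0 N1 hN0 hN1 hp hmub hmuv hth);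
    [apply CF_balance| |exact Hnj].
  destruct (Rle_or_lt 0 (CF 1 (N0 + 1)%nat 0%nat)) as [|Hneg]; auto.
  pose proof (balance_nonneg p mub muv th N0 N1 hN0 hN1 hp hmub hmuv hth _
    (balance_lincomb _ _ _ _ _ _ (-1) 0 _ _ (CF_balance 1) (CF_balance 1))
    ltac:(cbv beta; lra) 1 1 ltac:(right; lia)) as H.
  cbv beta in H. rewrite CF_11 in H. lra.
Qed.

Lemma closed_form_mass_ge_1 : 1 <= mass.
Proof.
  rewrite <- (CF_11 1) at 1. apply sum_omega_ge_11. apply closed_form_nonneg.
Qed.

Lemma normalized_closed_form_stationary : stationary p mub muv th N0 N1 (CF (1 / mass)).
Proof.
  pose proof closed_form_mass_ge_1.
  split; [|split].
  - intros n j Hnj. rewrite closed_form_scal.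
    apply Rmult_le_pos; [|apply closed_form_nonneg; auto].
    unfold Rdiv. rewrite Rmult_1_l. left. apply Rinv_0_lt_compat. lra.
  - rewrite (sum_omega_ext N0 N1 _ (fun n j => 1 / mass * CF 1 n j))
      by (intros; apply closed_form_scal).
    rewrite sum_omega_scal. field. lra.
  - apply (invariant_of_balance p mub muv th N0 N1 hN0 hN1). apply CF_balance.
Qed.

Lemma stationary_eq_normalized_closed_form pi : stationary p mub muv th N0 N1 pi ->
  forall n j, inOmega N0 N1 n j -> pi n j = CF (1 / mass) n j.
Proof.
  intros [_ [Hsum Hinv]].
  pose proof closed_form_mass_ge_1.
  assert (B : balance p mub muv th N0 N1 pi) by (apply (balance_of_invariant p mub muv th N0 N1 hN0 hN1); auto).
  set (t := pi (N0 + 1)%nat 0%nat / CF 1 (N0 + 1)%nat 0%nat).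
  assert (W : forall n j, inOmega N0 N1 n j -> pi n j = t * CF 1 n j).
  { apply (balance_proportional p mub muv th N0 N1 hN0 hN1 hp hmub hmuv hth);
      [exact B|apply CF_balance|apply closed_form_top_neq0]. }
  assert (T : t = 1 / mass).
  { rewrite (sum_omega_ext N0 N1 _ (fun n j => t * CF 1 n j)), sum_omega_scal in Hsum by auto.
    apply (Rmult_eq_reg_r mass); [|lra]. rewrite Hsum. field. lra. }
  intros n j Hnj. rewrite W, T, (closed_form_scal p mub muv th N0 N1 (1 / mass)) by auto.
  reflexivity.
Qed.

End Stationary.

Theorem theorem3p1 (p mub muv th : R) (N0 N1 : nat)
  (hp : 0 < p < 1) (hmub : 0 < mub < 1) (hmuv : 0 < muv < 1) (hth : 0 < th < 1)
  (hN0 : (2 <= N0)%nat) (hN1 : (N0 + 2 <= N1)%nat)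
  (halpha : alpha p mub < 1)
  (hDelta : DeltaQ p muv th N0 <> 0)
  (hx1 : alpha p mub <> x1star p muv th)
  (hx2 : alpha p mub <> x2star p muv th) :
  exists pi : nat -> nat -> R,
    stationary p mub muv th N0 N1 pi /\
    (forall pi' : nat -> nat -> R, stationary p mub muv th N0 N1 pi' ->
       forall n j, inOmega N0 N1 n j -> pi' n j = pi n j) /\
    (forall n j, inOmega N0 N1 n j ->
       pi n j = closed_form p mub muv th N0 (pi 1%nat 1%nat) N1 n j).
Proof.
  set (mass := sum_omega N0 N1 (closed_form p mub muv th N0 1 N1)).
  exists (closed_form p mub muv th N0 (1 / mass) N1).
  split; [|split].
  - apply normalized_closed_form_stationary; auto.
  - apply stationary_eq_normalized_closed_form; auto.
  - intros n j _. rewrite closed_form_11; auto.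
Qed.
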